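(* Let $q=AB$ be a two-atom query over $R$ satisfying the standing assumption below, such that $\mathrm{vars}(A)\cap\mathrm{vars}(B)\subseteq\mathrm{key}(B)$ or $\mathrm{key}(A)\subseteq\mathrm{key}(B)$. Then $q$ satisfies the zig-zag property: for every database $D$ and all facts $a,b,b',c$ of $D$ with $a\not\sim c$, $a\ne b$ and $b\sim b'$, if $D\models q(ab)$ and $D\models q(cb')$ then $D\models q(ab')$.
   Context: $R$ is a relation symbol of arity $k\ge1$ whose first $l$ positions form its primary key. Atoms are $R(\bar x)$ ($\bar x$ a tuple of variables), facts $R(\bar a)$ ($\bar a$ a tuple of elements). $\mathrm{vars}(A)$: variables of $A$; $\overline{\mathrm{key}}(t)$: tuple of first $l$ entries of $t$; $\mathrm{key}(t)$: set of those entries. $a\sim b$ iff $\overline{\mathrm{key}}(a)=\overline{\mathrm{key}}(b)$. A database is a finite set of facts. $D\models q(ab)$ means there is a mapping $\mu$ of variables to elements with $\mu(A)=a$, $\mu(B)=b$ and $a,b\in D$. Standing assumption: $\overline{\mathrm{key}}(A)\ne\overline{\mathrm{key}}(B)$ and $q$ is not equivalent over all consistent databases to a single-atom query. *)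

From mathcomp Require Import all_boot.
Set Implicit Arguments. Unset Strict Implicit. Unset Printing Implicit Defensive.

(* Relation R of arity k; primary key = first l positions.
   Variables and domain elements are both modelled by nat (countably
   infinite domain).  An atom R(x) is a k-tuple of variables, a fact R(a)
   a k-tuple of elements (the relation symbol is implicit: single relation). *)

Definition atom (k : nat) := k.-tuple nat.
Definition fact (k : nat) := k.-tuple nat.
Definition database (k : nat) := seq (fact k).

Definition keyt (l : nat) {k} (t : k.-tuple nat) : seq nat := take l t.
Definition keyeq (l : nat) {k} (a b : k.-tuple nat) : Prop := keyt l a = keyt l b.

Definition app {k} (mu : nat -> nat) (A : atom k) : fact k := map_tuple mu A.

Definition models_q2 {k} (D : database k) (A B : atom k) (a b : fact k) : Prop :=
  exists mu : nat -> nat, app mu A = a /\ app mu B = b /\ a \in D /\ b \in D.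

Definition sat2 {k} (D : database k) (A B : atom k) : Prop :=
  exists mu : nat -> nat, app mu A \in D /\ app mu B \in D.
Definition sat1 {k} (D : database k) (C : atom k) : Prop :=
  exists mu : nat -> nat, app mu C \in D.

Definition consistent (l : nat) {k} (D : database k) : Prop :=
  forall f g, f \in D -> g \in D -> keyeq l f g -> f = g.

Definition standing (l : nat) {k} (A B : atom k) : Prop :=
  keyt l A <> keyt l B /\
  ~ (exists C : atom k, forall D : database k, consistent l D ->
       (sat2 D A B <-> sat1 D C)).

Definition zigzag (l : nat) {k} (A B : atom k) : Prop :=
  forall (D : database k) (a b b' c : fact k),
    a \in D -> b \in D -> b' \in D -> c \in D ->
    ~ keyeq l a c -> a <> b -> keyeq l b b' ->
    models_q2 D A B a b -> models_q2 D A B c b' -> models_q2 D A B a b'.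

From mathcomp Require Import all_boot.

(* Let mu witness q(ab) and nu witness q(cb').  As b ~ b', mu and nu agree on
   the key variables of B.  If every variable shared by A and B is a key
   variable of B, the valuation following mu on vars(A) and nu elsewhere sends
   A to a and B to b', so it witnesses q(ab').  If key(A) is contained in
   key(B), then mu and nu also agree on key(A), hence a ~ c and the premise
   a ≁ c of the zig-zag property never holds. *)

Section Valuations.

Variables (k l : nat).
Implicit Types (mu nu : nat -> nat) (A B : atom k).

Lemma keyt_app mu A : keyt l (app mu A) = map mu (keyt l A).
Proof. by rewrite /keyt map_take. Qed.

Lemma app_eq_in mu nu A : {in A, mu =1 nu} -> app mu A = app nu A.
Proof. by move=> eq_mu_nu; apply: val_inj; apply/eq_in_map. Qed.

Lemma keyeq_app_eq_in mu nu B :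
  keyeq l (app mu B) (app nu B) -> {in keyt l B, mu =1 nu}.
Proof. by rewrite /keyeq !keyt_app => /eq_in_map. Qed.

Lemma keyeq_app_subset mu nu A B :
  {subset keyt l A <= keyt l B} ->
  keyeq l (app mu B) (app nu B) -> keyeq l (app mu A) (app nu A).
Proof.
move=> keyAB /keyeq_app_eq_in eq_key.
by rewrite /keyeq !keyt_app; apply/eq_in_map => x /keyAB /eq_key.
Qed.

Definition glue A mu nu (x : nat) : nat := if x \in A then mu x else nu x.

Lemma app_glue_l A mu nu : app (glue A mu nu) A = app mu A.
Proof. by apply: app_eq_in => x; rewrite /glue => ->. Qed.

Lemma app_glue_r A B mu nu :
  (forall x, x \in A -> x \in B -> x \in keyt l B) ->
  keyeq l (app mu B) (app nu B) -> app (glue A mu nu) B = app nu B.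
Proof.
move=> shared_key /keyeq_app_eq_in eq_key.
apply: app_eq_in => x xB; rewrite /glue; case: ifP => // xA.
exact/eq_key/shared_key.
Qed.

Lemma zigzag_shared_in_key A B :
  (forall x, x \in A -> x \in B -> x \in keyt l B) -> zigzag l A B.
Proof.
move=> shared_key; rewrite /zigzag => D a b b' c aD _ b'D _ _ _ bb'.
move=> [mu [muA [muB _]]] [nu [_ [nuB _]]].
rewrite -muB -nuB in bb'.
exists (glue A mu nu); split; first by rewrite app_glue_l.
split; last by split.
by rewrite -nuB; apply: app_glue_r.
Qed.

Lemma zigzag_key_subset A B :
  {subset keyt l A <= keyt l B} -> zigzag l A B.
Proof.
move=> keyAB; rewrite /zigzag => D a b b' c _ _ _ _ not_ac _ bb'.
move=> [mu [muA [muB _]]] [nu [nuA [nuB _]]].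
rewrite -muB -nuB in bb'.
by case: not_ac; rewrite -muA -nuA; apply: keyeq_app_subset bb'.
Qed.

End Valuations.

Theorem lemma6p2 (k l : nat) (A B : atom k) :
  1 <= k -> l <= k ->
  standing l A B ->
  ((forall x : nat, x \in A -> x \in B -> x \in keyt l B) \/
   (forall x : nat, x \in keyt l A -> x \in keyt l B)) ->
  zigzag l A B.
Proof.
move=> _ _ _ [shared_key | keyAB].
- exact: zigzag_shared_in_key.
- exact: zigzag_key_subset.
Qed.
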